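(* Let $n$ be a positive even integer and $a=\sqrt[n]{n+1}$. Let $\eta:(-a,a)\to(-a,a)$ be the involution defined by $\eta(0)=0$ and, for $u\neq0$, $\eta(u)$ is the unique point with $u\,\eta(u)<0$ and $W(\eta(u))=W(u)$. Define $$T_n(u)=(n+1)\frac{\int_{\eta(u)}^{u}t^n\,dt}{\int_{\eta(u)}^{u}dt}=\sum_{k=0}^{n}u^{n-k}\eta(u)^k .$$ Then $T_n'(u)>0$ for all $u\in(0,a)$.
   Context: $W(u)=\frac{u^2}{2}-\frac{u^{n+2}}{(n+1)(n+2)}$; $W$ is strictly decreasing on $(-a,0)$ and strictly increasing on $(0,a)$, with $W(-a)=W(a)=d_n=\frac{n(n+1)^{2/n}}{2(n+2)}$, so $\eta$ is well defined. *)

From HB Require Import structures.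
From mathcomp Require Import all_boot all_order all_algebra.
From mathcomp Require Import all_classical all_reals all_analysis.
Unset Implicit Arguments. Unset Printing Implicit Defensive.
Import Order.TTheory GRing.Theory Num.Theory.
Local Open Scope classical_set_scope.
Local Open Scope ring_scope.

Definition Wn (R : realType) (n : nat) (u : R) : R :=
  u ^+ 2 / 2 - u ^+ n.+2 / ((n.+1 * n.+2)%:R).

Definition a_n (R : realType) (n : nat) : R := (n.+1)%:R `^ (n%:R)^-1.

Definition eta_n (R : realType) (n : nat) (u : R) : R :=
  if u == 0 then 0 else
  xget 0 [set v : R | - a_n R n < v < a_n R n /\ u * v < 0 /\ Wn R n v = Wn R n u].

Definition T_n (R : realType) (n : nat) (u : R) : R :=
  \sum_(k < n.+1) u ^+ (n - k) * (eta_n R n u) ^+ k.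

From HB Require Import structures.
From mathcomp Require Import all_boot all_order all_algebra.
From mathcomp Require Import all_classical all_reals all_analysis.
From mathcomp Require Import ring lra.
Import Order.TTheory GRing.Theory Num.Theory numFieldNormedType.Exports.
Local Open Scope ring_scope.

(* For even n the potential W is an even function, strictly increasing on
   [0, a) since W'(t) = t (1 - t^n / (n+1)) and a^n = n+1.  Hence the reflected
   point is simply eta(u) = -u, and T_n(u) = sum_k (-1)^k u^n collapses (its
   n+1 terms alternate and n+1 is odd) to u^n, whose derivative is n u^(n-1). *)

Lemma sum_alternating_expn (S : comPzRingType) (m : nat) (x : S) :
  \sum_(k < m.+1) x ^+ (m - k) * (- x) ^+ k = (~~ odd m)%:R * x ^+ m.
Proof.
transitivity (\sum_(k < m.+1) (-1) ^+ k * x ^+ m).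
  apply: eq_bigr => k _.
  by rewrite [(- x) ^+ k]exprNn mulrCA -exprD subnK // -ltnS ltn_ord.
rewrite -mulr_suml; congr (_ * _).
elim: m => [|m ih]; first by rewrite big_ord1 expr0.
rewrite big_ord_recr /= ih -signr_odd /=.
by case: (odd m); rewrite /= ?expr1 ?expr0 ?subrr ?add0r.
Qed.

Section Potential.
Variables (R : realType) (n : nat).

Lemma is_derive_Wn (x : R) :
  is_derive x 1 (Wn R n) (x * (1 - x ^+ n / n.+1%:R)).
Proof.
have -> : Wn R n = ((@id R) ^+ 2) * cst 2^-1
                   - ((@id R) ^+ n.+2) * cst (n.+1 * n.+2)%:R^-1.
  by apply/funext => u; rewrite /Wn !fctE.
apply: is_derive_eq.
rewrite /= !fctE !scaler0 !add0r /GRing.scale /= !mulr1 expr1 exprS natrM.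
field; have := ler0n R n.
by move=> h; apply/andP; split; apply/eqP; lra.
Qed.

Lemma a_n_gt0 : 0 < a_n R n.
Proof. by rewrite /a_n powR_gt0 // ltr0n. Qed.

Hypothesis n_gt0 : (0 < n)%N.

Lemma a_n_expn : a_n R n ^+ n = n.+1%:R.
Proof.
rewrite /a_n -powR_mulrn ?powR_ge0 // -powRrM mulVf; last by rewrite pnatr_eq0 -lt0n.
by rewrite powRr1 // ler0n.
Qed.

Lemma Wn_increasing : {in `[0, a_n R n[ &, {homo Wn R n : x y / x < y}}.
Proof.
move=> x y; rewrite !in_itv /= => /andP[x0 xa] /andP[y0 ya] xy.
apply: (@gtr0_derive1_lt R (Wn R n) 0 (a_n R n) _ _ true false) => //.
- by move=> t _; case: (is_derive_Wn t).
- move=> t; rewrite in_itv /= => /andP[t0 ta].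
  rewrite derive1E (is_derive_Wn t).(derive_val) mulr_gt0 // subr_gt0.
  by rewrite ltr_pdivrMr ?ltr0n // mul1r -a_n_expn ltrXn2r ?(ltW t0) ?lt0n_neq0.
- apply: continuous_subspaceT => t.
  apply: differentiable_continuous; apply/derivable1_diffP.
  by case: (is_derive_Wn t).
- by rewrite in_itv /= x0 ltW.
- by rewrite in_itv /= y0 ltW.
Qed.

Hypothesis n_even : ~~ odd n.

Lemma Wn_opp (x : R) : Wn R n (- x) = Wn R n x.
Proof. by rewrite /Wn sqrrN exprNn -signr_odd /= (negbTE n_even) mul1r. Qed.

Lemma eta_nE (v : R) : 0 < v < a_n R n -> eta_n R n v = - v.
Proof.
move=> /andP[v0 va]; rewrite /eta_n gt_eqF //.
apply: xget_unique.
  split; first by rewrite ltrN2 va /=; have := a_n_gt0; lra.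
  by rewrite mulrN oppr_lt0 mulr_gt0 // Wn_opp.
move=> w [/andP[aw wa] [vw Ww]].
have w0 : w < 0 by rewrite -(pmulr_rlt0 _ v0).
have vI : v \in `[0, a_n R n[ by rewrite in_itv /= ltW.
have wI : - w \in `[0, a_n R n[ by rewrite in_itv /= ltrNl oppr_ge0 ltW.
rewrite -Wn_opp in Ww; apply: oppr_inj; rewrite opprK.
case: (ltgtP (- w) v) => // [wv|vw'].
- by have := Wn_increasing _ _ wI vI wv; rewrite Ww ltxx.
- by have := Wn_increasing _ _ vI wI vw'; rewrite Ww ltxx.
Qed.

Lemma T_nE (v : R) : 0 < v < a_n R n -> T_n R n v = v ^+ n.
Proof. by move=> hv; rewrite /T_n eta_nE // sum_alternating_expn n_even mul1r. Qed.

End Potential.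

Theorem mainTheorem6 (R : realType) (n : nat) (hn : (0 < n)%N) (hev : ~~ odd n)
  (u : R) (hu : 0 < u < a_n R n) :
  derivable (T_n R n) u 1 /\ 0 < derive1 (T_n R n) u.
Proof.
have T_near : \forall v \near u, (@GRing.exp R ^~ n) v = T_n R n v.
  have uI : u \in `]0, a_n R n[ by rewrite in_itv.
  by apply: filterS (near_in_itvoo uI) => v; rewrite in_itv /= => /T_nE ->.
split; first by apply: (near_eq_derivable T_near); exact: exprn_derivable.
rewrite derive1E -(near_eq_derive _ T_near) exp_derive /GRing.scale /= mulr1.
by case/andP: hu => u0 _; rewrite mulr_gt0 ?ltr0n ?exprn_gt0.
Qed.
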